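(* Let $\mathcal{C}$ be a Frobenius category and $f:M\to N$ a morphism in $\mathcal{C}$. Then: (1) $f$ is a $0$-Ext-phantom morphism if and only if $f$ factors through a projective object of $\mathcal{C}$; (2) $f$ is a $0$-Ext-invertible morphism if and only if there exist projective objects $P,Q$ of $\mathcal{C}$ and morphisms $g_1:Q\to N$, $l:M\to P$, $g_2:Q\to P$ such that the morphism $M\oplus Q\to N\oplus P$ given by the matrix $\begin{pmatrix} f & g_1\\ l & g_2\end{pmatrix}$ is an isomorphism in $\mathcal{C}$.
   Context: Let $\mathcal{A}$ be an abelian category and $\mathcal{C}$ an extension-closed full additive subcategory of $\mathcal{A}$, viewed as an exact category whose conflations are the short exact sequences of $\mathcal{A}$ with all terms in $\mathcal{C}$; $\operatorname{Ext}^i_{\mathcal{C}}$ is Yoneda Ext in $\mathcal{C}$. $\mathcal{C}$ is a Frobenius category if it has enough projectives and enough injectives and the projective objects coincide with the injective objects. A morphism $f:M\to N$ is $0$-Ext-phantom if the natural transformation $\operatorname{Ext}^1_{\mathcal{C}}(-,f):\operatorname{Ext}^1_{\mathcal{C}}(-,M)\to\operatorname{Ext}^1_{\mathcal{C}}(-,N)$ is zero, and $0$-Ext-invertible if it is a natural isomorphism. *)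

(* an abelian category is set up from scratch as a
   preadditive category (hom-sets are mathcomp zmodTypes) with the
   abelian axioms; Yoneda Ext^1 in an extension-closed subcategory is
   encoded via extensions, the Yoneda equivalence and pushout maps. *)
From HB Require Import structures.
From mathcomp Require Import all_boot all_algebra.
Set Implicit Arguments. Unset Strict Implicit. Unset Printing Implicit Defensive.
Import GRing.Theory.
Local Open Scope ring_scope.

Record PreAdd := {
  Ob : Type;
  Mor : Ob -> Ob -> zmodType;
  idm : forall X, Mor X X;
  comp : forall X Y Z, Mor Y Z -> Mor X Y -> Mor X Z;
  compA : forall W X Y Z (h : Mor Y Z) (g : Mor X Y) (f : Mor W X),
      comp h (comp g f) = comp (comp h g) f;
  comp1m : forall X Y (f : Mor X Y), comp (idm Y) f = f;
  compm1 : forall X Y (f : Mor X Y), comp f (idm X) = f;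
  compDl : forall X Y Z (g g' : Mor Y Z) (f : Mor X Y),
      comp (g + g') f = comp g f + comp g' f;
  compDr : forall X Y Z (g : Mor Y Z) (f f' : Mor X Y),
      comp g (f + f') = comp g f + comp g f' }.

Arguments Mor {p} _ _.
Arguments idm {p} X.
Arguments comp {p X Y Z} _ _.

Section Defs.
Variable A : PreAdd.
Local Notation Ob := (Ob A).
Local Notation Hom := (@Mor A).

Definition mono X Y (f : Hom X Y) :=
  forall W (g : Hom W X), comp f g = 0 -> g = 0.
Definition epi X Y (f : Hom X Y) :=
  forall W (g : Hom Y W), comp g f = 0 -> g = 0.

Definition is_kernel K X Y (k : Hom K X) (f : Hom X Y) :=
  comp f k = 0 /\
  forall W (g : Hom W X), comp f g = 0 ->
    exists h : Hom W K, comp k h = g /\ forall h', comp k h' = g -> h' = h.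
Definition is_cokernel X Y Q (c : Hom Y Q) (f : Hom X Y) :=
  comp c f = 0 /\
  forall W (g : Hom Y W), comp g f = 0 ->
    exists h : Hom Q W, comp h c = g /\ forall h', comp h' c = g -> h' = h.

Definition is_zero_object (Z : Ob) :=
  forall X, (forall h : Hom X Z, h = 0) /\ (forall h : Hom Z X, h = 0).

Definition is_biproduct X1 X2 B (i1 : Hom X1 B) (i2 : Hom X2 B)
    (p1 : Hom B X1) (p2 : Hom B X2) :=
  [/\ comp p1 i1 = idm X1, comp p2 i2 = idm X2, comp p2 i1 = 0,
      comp p1 i2 = 0 & comp i1 p1 + comp i2 p2 = idm B].

Definition abelian :=
  (exists Z, is_zero_object Z)
  /\ (forall X1 X2, exists B (i1 : Hom X1 B) (i2 : Hom X2 B) p1 p2,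
         is_biproduct i1 i2 p1 p2)
  /\ (forall X Y (f : Hom X Y), exists K (k : Hom K X), is_kernel k f)
  /\ (forall X Y (f : Hom X Y), exists Q (c : Hom Y Q), is_cokernel c f)
  /\ (forall X Y (f : Hom X Y), mono f -> exists Z (g : Hom Y Z), is_kernel f g)
  /\ (forall X Y (f : Hom X Y), epi f -> exists Z (g : Hom Z X), is_cokernel f g).

Definition is_iso X Y (f : Hom X Y) :=
  exists g : Hom Y X, comp g f = idm X /\ comp f g = idm Y.

Definition short_exact X E Y (i : Hom X E) (p : Hom E Y) :=
  is_kernel i p /\ is_cokernel p i.

Variable C : Ob -> Prop.

Definition ext_closed_additive :=
  [/\ exists Z, is_zero_object Z /\ C Z,
      forall X1 X2 B (i1 : Hom X1 B) (i2 : Hom X2 B) p1 p2,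
        is_biproduct i1 i2 p1 p2 -> C X1 -> C X2 -> C B
    & forall X E Y (i : Hom X E) (p : Hom E Y),
        short_exact i p -> C X -> C Y -> C E].

Definition conflation X E Y (i : Hom X E) (p : Hom E Y) :=
  [/\ short_exact i p, C X, C E & C Y].

Definition projective (P : Ob) :=
  C P /\ forall X E Y (i : Hom X E) (p : Hom E Y), conflation i p ->
    forall g : Hom P Y, exists h : Hom P E, comp p h = g.
Definition injective (I : Ob) :=
  C I /\ forall X E Y (i : Hom X E) (p : Hom E Y), conflation i p ->
    forall g : Hom X I, exists h : Hom E I, comp h i = g.

Definition frobenius :=
  [/\ forall X, C X -> exists K P (i : Hom K P) (p : Hom P X),
         conflation i p /\ projective P,
      forall X, C X -> exists I Y (i : Hom X I) (p : Hom I Y),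
         conflation i p /\ injective I
    & forall P, C P -> (projective P <-> injective P)].

(* an element of Ext^1_C(X,M) is represented by a conflation M -> E -> X *)
Record extension (X M : Ob) := Extension {
  ext_mid : Ob;
  ext_in : Hom M ext_mid;
  ext_out : Hom ext_mid X;
  ext_confl : conflation ext_in ext_out }.

Definition ext_equiv X M (xi xi' : extension X M) :=
  exists e : Hom (ext_mid xi) (ext_mid xi'),
    comp e (ext_in xi) = ext_in xi' /\ comp (ext_out xi') e = ext_out xi.

(* xi' represents f_* [xi] = Ext^1_C(X, f) [xi] (pushout along f) *)
Definition pushout_ext X M N (f : Hom M N) (xi : extension X M)
    (xi' : extension X N) :=
  exists e : Hom (ext_mid xi) (ext_mid xi'),
    comp e (ext_in xi) = comp (ext_in xi') f /\
    comp (ext_out xi') e = ext_out xi.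

(* xi represents the zero element of Ext^1_C(X, N):
   the class of the split sequence N -> N (+) X -> X *)
Definition ext_zero X N (xi : extension X N) :=
  exists B (i1 : Hom N B) (i2 : Hom X B) p1 p2,
    is_biproduct i1 i2 p1 p2 /\
    exists e : Hom B (ext_mid xi),
      comp e i1 = ext_in xi /\ comp (ext_out xi) e = p2.

(* Ext^1_C(-, f) is the zero natural transformation *)
Definition ext_phantom0 M N (f : Hom M N) :=
  forall X, C X -> forall (xi : extension X M) (xi' : extension X N),
    pushout_ext f xi xi' -> ext_zero xi'.

(* Ext^1_C(-, f) is a natural isomorphism: each component
   Ext^1_C(X, M) -> Ext^1_C(X, N) is bijective on Yoneda classes *)
Definition ext_invertible0 M N (f : Hom M N) :=
  forall X, C X ->
    (forall (xi1 xi2 : extension X M) (eta1 eta2 : extension X N),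
        pushout_ext f xi1 eta1 -> pushout_ext f xi2 eta2 ->
        ext_equiv eta1 eta2 -> ext_equiv xi1 xi2) /\
    (forall eta : extension X N, exists (xi : extension X M)
        (eta' : extension X N), pushout_ext f xi eta' /\ ext_equiv eta' eta).

Definition factors_through_projective M N (f : Hom M N) :=
  exists P (a : Hom M P) (b : Hom P N), projective P /\ f = comp b a.

(* the matrix [[f, g1], [l, g2]] : M (+) Q -> N (+) P is an isomorphism *)
Definition matrix_iso_condition M N (f : Hom M N) :=
  exists P Q (g1 : Hom Q N) (l : Hom M P) (g2 : Hom Q P),
    projective P /\ projective Q /\
    exists B1 (iM : Hom M B1) (iQ : Hom Q B1) (pM : Hom B1 M) (pQ : Hom B1 Q)
           B2 (jN : Hom N B2) (jP : Hom P B2) (qN : Hom B2 N) (qP : Hom B2 P),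
      is_biproduct iM iQ pM pQ /\ is_biproduct jN jP qN qP /\
      is_iso (comp jN (comp f pM) + comp jN (comp g1 pQ)
              + comp jP (comp l pM) + comp jP (comp g2 pQ)).

End Defs.

(* Projective objects of a Frobenius category are injective, so a map [h]
   factoring through one extends along every inflation [i : M -> E] as
   [h = s ⊙ i]. Hence perturbing a map by [h] does not change the pushout of
   an extension along it, and pushing along [h] itself yields a split
   extension. Conversely, if [f] is 0-Ext-phantom, the pushout of an
   injective envelope [M -> I -> Y] along [f] splits, and a retraction of it
   exhibits [f] as a map through [I].

   For (2), both conditions are equivalent to [f] having an inverse [g]
   modulo maps through projectives. Such a [g] inverts [f] on Ext. Conversely,
   surjectivity on the envelope [N -> J -> Y'] yields [g] with
   [f ⊙ g - 1] through [J], and injectivity on the envelope of [M] then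
   forces [g ⊙ f - 1] through [I]. Finally, if [g ⊙ f - 1 = s ⊙ i], the map
   [(f, i) : M -> N (+) I] is a split mono whose cokernel is the pushout [P]
   of the envelope along [f]; thus [M (+) P ~ N (+) I], and [P] is a retract
   of [I (+) J], hence projective. *)

From Pilot Require Import Defs.
From mathcomp Require Import all_boot all_algebra.
Set Implicit Arguments. Unset Strict Implicit. Unset Printing Implicit Defensive.
Import GRing.Theory.
(* Let [comp] and [compA] of Defs shadow their namesakes in ssrfun. *)
Import Defs.
Local Open Scope ring_scope.

Local Notation "g ⊙ f" := (comp g f) (at level 40, left associativity).

Section PreAdditive.
Variable A : PreAdd.
Implicit Types X Y Z W : Ob A.

Lemma comp0l X Y Z (f : Mor X Y) : (0 : Mor Y Z) ⊙ f = 0.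
Proof. by apply: (addrI ((0 : Mor Y Z) ⊙ f)); rewrite -compDl !addr0. Qed.

Lemma comp0r X Y Z (g : Mor Y Z) : g ⊙ (0 : Mor X Y) = 0.
Proof. by apply: (addrI (g ⊙ (0 : Mor X Y))); rewrite -compDr !addr0. Qed.

Lemma compNl X Y Z (g : Mor Y Z) (f : Mor X Y) : (- g) ⊙ f = - (g ⊙ f).
Proof. by apply: (addrI (g ⊙ f)); rewrite -compDl !subrr comp0l. Qed.

Lemma compNr X Y Z (g : Mor Y Z) (f : Mor X Y) : g ⊙ (- f) = - (g ⊙ f).
Proof. by apply: (addrI (g ⊙ f)); rewrite -compDr !subrr comp0r. Qed.

Lemma compBl X Y Z (g g' : Mor Y Z) (f : Mor X Y) : (g - g') ⊙ f = g ⊙ f - g' ⊙ f.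
Proof. by rewrite compDl compNl. Qed.

Lemma compBr X Y Z (g : Mor Y Z) (f f' : Mor X Y) : g ⊙ (f - f') = g ⊙ f - g ⊙ f'.
Proof. by rewrite compDr compNr. Qed.

Lemma compl_eq X Y Z W (u : Mor Y Z) (v : Mor X Y) (w : Mor X Z) (x : Mor Z W) :
  u ⊙ v = w -> x ⊙ u ⊙ v = x ⊙ w.
Proof. by rewrite -compA => ->. Qed.

End PreAdditive.

Ltac comp_norm :=
  rewrite ?(compDl, compDr, compNl, compNr, comp0l, comp0r, comp1m, compm1);
  rewrite ?compA ?(addr0, add0r, subr0, sub0r, opprK, oppr0).

(* Rewrite with [u ⊙ v = w] also where [u ⊙ v] ends a left-associated composite. *)
Ltac crw H := rewrite ?H ?(compl_eq _ H); comp_norm.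

Section Additive.
Variable A : PreAdd.
Implicit Types X Y Z W : Ob A.

Lemma kernel_lift K X Y W (k : Mor K X) (f : Mor X Y) (g : Mor W X) :
  is_kernel k f -> f ⊙ g = 0 -> exists h, k ⊙ h = g.
Proof. by case=> _ univ /univ [h [kh _]]; exists h. Qed.

Lemma kernel_cancel K X Y W (k : Mor K X) (f : Mor X Y) (a b : Mor W K) :
  is_kernel k f -> k ⊙ a = k ⊙ b -> a = b.
Proof.
case=> fk0 univ kab.
have [h [_ uniq]] := univ W (k ⊙ a) ltac:(by rewrite compA fk0 comp0l).
by rewrite (uniq a erefl) (uniq b (esym kab)).
Qed.

Lemma cokernel_desc X Y Q W (c : Mor Y Q) (f : Mor X Y) (g : Mor Y W) :
  is_cokernel c f -> g ⊙ f = 0 -> exists h, h ⊙ c = g.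
Proof. by case=> _ univ /univ [h [hc _]]; exists h. Qed.

Lemma cokernel_cancel X Y Q W (c : Mor Y Q) (f : Mor X Y) (a b : Mor Q W) :
  is_cokernel c f -> a ⊙ c = b ⊙ c -> a = b.
Proof.
case=> cf0 univ abc.
have [h [_ uniq]] := univ W (a ⊙ c) ltac:(by rewrite -compA cf0 comp0r).
by rewrite (uniq a erefl) (uniq b (esym abc)).
Qed.

Lemma mono_cancel X Y W (m : Mor X Y) (a b : Mor W X) :
  mono m -> m ⊙ a = m ⊙ b -> a = b.
Proof.
move=> m_mono mab; apply/eqP; rewrite -subr_eq0; apply/eqP.
by apply: m_mono; rewrite compBr mab subrr.
Qed.

Lemma section_retraction X E Y (i : Mor X E) (p : Mor E Y) (s : Mor Y E) :
  short_exact i p -> p ⊙ s = idm Y -> exists r, r ⊙ i = idm X.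
Proof.
case=> ker_i [pi0 _] ps.
have [r ir] := kernel_lift ker_i (g := idm E - s ⊙ p) ltac:(by comp_norm; rewrite ps comp1m subrr).
exists r; apply: (kernel_cancel ker_i).
by rewrite compA ir compBl comp1m compm1 -compA pi0 comp0r subr0.
Qed.

Lemma biproduct_ext X1 X2 B Z (i1 : Mor X1 B) (i2 : Mor X2 B) p1 p2 (u v : Mor B Z) :
  is_biproduct i1 i2 p1 p2 -> u ⊙ i1 = v ⊙ i1 -> u ⊙ i2 = v ⊙ i2 -> u = v.
Proof.
case=> _ _ _ _ sum_id ui1 ui2.
by rewrite -(compm1 u) -(compm1 v) -sum_id; comp_norm; rewrite ui1 ui2.
Qed.

Lemma biproduct_iso X1 X2 B W (i1 : Mor X1 B) (i2 : Mor X2 B) p1 p2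
    (a1 : Mor X1 W) (a2 : Mor X2 W) r1 r2 :
  is_biproduct i1 i2 p1 p2 -> is_biproduct a1 a2 r1 r2 ->
  is_iso (a1 ⊙ p1 + a2 ⊙ p2).
Proof.
move=> [p1i1 p2i2 p2i1 p1i2 isum] [r1a1 r2a2 r2a1 r1a2 asum].
exists (i1 ⊙ r1 + i2 ⊙ r2); split; comp_norm.
- by crw r1a1; crw r2a2; crw r2a1; crw r1a2.
- by crw p1i1; crw p2i2; crw p2i1; crw p1i2.
Qed.

Lemma split_mono_biproduct X W Q (phi : Mor X W) (rho : Mor W X) (pi : Mor W Q) :
  rho ⊙ phi = idm X -> is_cokernel pi phi -> exists sigma, is_biproduct phi sigma rho pi.
Proof.
move=> rho_phi coker_pi; have pi_phi := coker_pi.1.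
have [sigma sigma_pi] := cokernel_desc coker_pi (g := idm W - phi ⊙ rho)
  ltac:(by rewrite compBl comp1m -compA rho_phi compm1 subrr).
exists sigma; split => //.
- apply: (cokernel_cancel coker_pi).
  by rewrite -compA sigma_pi compBr compm1 compA pi_phi comp0l subr0 comp1m.
- apply: (cokernel_cancel coker_pi).
  by rewrite -compA sigma_pi compBr compm1 compA rho_phi comp1m subrr comp0l.
- by rewrite sigma_pi addrC subrK.
Qed.

Definition pushout_square M I N P (i : Mor M I) (f : Mor M N) (e : Mor I P) (j : Mor N P) :=
  [/\ e ⊙ i = j ⊙ f,
      forall Z (b : Mor I Z) (c : Mor N Z), b ⊙ i = c ⊙ f ->
        exists u, u ⊙ e = b /\ u ⊙ j = c
    & forall Z (u u' : Mor P Z), u ⊙ e = u' ⊙ e -> u ⊙ j = u' ⊙ j -> u = u'].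

Lemma cokernel_pushout_square M I N S P (i : Mor M I) (f : Mor M N)
    (iI : Mor I S) (iN : Mor N S) pI pN (c : Mor S P) :
  is_biproduct iI iN pI pN -> is_cokernel c (iI ⊙ i - iN ⊙ f) ->
  pushout_square i f (c ⊙ iI) (c ⊙ iN).
Proof.
move=> bip coker_c; have [pIiI pNiN pNiI pIiN _] := bip.
split.
- by apply/eqP; rewrite -subr_eq0 -!compA -compBr coker_c.1.
- move=> Z b d bd.
  have [u uc] := cokernel_desc coker_c (g := b ⊙ pI + d ⊙ pN)
    ltac:(by comp_norm; crw pIiI; crw pNiN; crw pNiI; crw pIiN; rewrite bd subrr).
  by exists u; rewrite !compA uc; comp_norm; crw pIiI; crw pNiN; crw pNiI; crw pIiN.
- move=> Z u u' ue uj; apply: (cokernel_cancel coker_c).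
  by apply: (biproduct_ext bip); rewrite -!compA.
Qed.

Lemma pushout_square_cokernel M I N P W (i : Mor M I) (f : Mor M N) (e : Mor I P)
    (j : Mor N P) (jN : Mor N W) (jI : Mor I W) qN qI :
  pushout_square i f e j -> is_biproduct jN jI qN qI ->
  is_cokernel (j ⊙ qN - e ⊙ qI) (jN ⊙ f + jI ⊙ i).
Proof.
move=> [ei_jf univ uniq] bip; have [qNjN qIjI qIjN qNjI _] := bip.
split.
  by comp_norm; crw qNjN; crw qIjI; crw qIjN; crw qNjI; rewrite ei_jf subrr.
move=> Z h h_phi.
have [|u [ue uj]] := univ Z (- (h ⊙ jI)) (h ⊙ jN).
  by apply/eqP; rewrite compNl eq_sym -addr_eq0 -!compA -compDr h_phi.
exists u; split.
  by apply: (biproduct_ext bip); comp_norm; crw qNjN; crw qIjI; crw qIjN; crw qNjI;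
     rewrite ?ue ?uj ?opprK.
move=> u' u'_pi; apply: uniq.
  by rewrite ue -u'_pi; comp_norm; crw qNjN; crw qIjI; crw qIjN; crw qNjI.
by rewrite uj -u'_pi; comp_norm; crw qNjN; crw qIjI; crw qIjN; crw qNjI.
Qed.

End Additive.

Section Abelian.
Variable A : PreAdd.
Hypothesis hA : abelian A.
Implicit Types X Y Z W : Ob A.

Lemma mono_kernel_of_cokernel X Y Q (m : Mor X Y) (c : Mor Y Q) :
  mono m -> is_cokernel c m -> is_kernel m c.
Proof.
have [_ [_ [_ [_ [mono_kernel _]]]]] := hA.
move=> m_mono coker_c; have [Z [g ker_m]] := mono_kernel _ _ m m_mono.
have [g' g'c] := cokernel_desc coker_c ker_m.1.
split=> [|W z cz0]; first exact: coker_c.1.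
by apply: ker_m.2; rewrite -g'c -compA cz0 comp0r.
Qed.

Lemma mono_epi_iso X Y (e : Mor X Y) : mono e -> epi e -> is_iso e.
Proof.
have [_ [_ [_ [_ [mono_kernel _]]]]] := hA.
move=> e_mono e_epi; have [Z [g ker_e]] := mono_kernel _ _ e e_mono.
have g0 : g = 0 by apply: e_epi; exact: ker_e.1.
have [h eh] := kernel_lift ker_e (g := idm Y) ltac:(by rewrite g0 comp0l).
exists h; split=> //.
by apply: (mono_cancel e_mono); rewrite compA eh comp1m compm1.
Qed.

Lemma short_five X E E' Y (i : Mor X E) (p : Mor E Y) (i' : Mor X E') (p' : Mor E' Y)
    (e : Mor E E') :
  short_exact i p -> short_exact i' p' -> e ⊙ i = i' -> p' ⊙ e = p -> is_iso e.
Proof.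
move=> [ker_i coker_p] [ker_i' coker_p'] ei p'e; apply: mono_epi_iso.
- move=> W z ez0.
  have [y iy] := kernel_lift ker_i (g := z) ltac:(by rewrite -p'e -compA ez0 comp0r).
  have y0 : y = 0 by apply: (kernel_cancel ker_i'); rewrite -ei -compA iy ez0 comp0r.
  by rewrite -iy y0 comp0r.
- move=> W z ze0.
  have [y yp'] := cokernel_desc coker_p' (g := z) ltac:(by rewrite -ei compA ze0 comp0l).
  have y0 : y = 0 by apply: (cokernel_cancel coker_p); rewrite -p'e compA yp' ze0 comp0l.
  by rewrite -yp' y0 comp0l.
Qed.

Lemma pushout_short_exact M I Y N S P (i : Mor M I) (p : Mor I Y) (f : Mor M N)
    (iI : Mor I S) (iN : Mor N S) pI pN (c : Mor S P) :
  short_exact i p -> is_biproduct iI iN pI pN -> is_cokernel c (iI ⊙ i - iN ⊙ f) ->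
  exists q, short_exact (c ⊙ iN) q /\ q ⊙ (c ⊙ iI) = p.
Proof.
move=> [ker_i coker_p] bip coker_c.
have [ei_jf univ uniq] := cokernel_pushout_square bip coker_c.
have [pIiI pNiN pNiI pIiN _] := bip.
have [|q [qe qj]] := univ _ p 0; first by rewrite ker_i.1 comp0l.
have m_mono : mono (iI ⊙ i - iN ⊙ f).
  move=> W x mx0; apply: (kernel_cancel ker_i); rewrite comp0r.
  by move: (congr1 (comp pI) mx0); comp_norm; crw pIiI; crw pIiN.
have ker_m := mono_kernel_of_cokernel m_mono coker_c.
have j_mono : mono (c ⊙ iN).
  move=> W y cy0.
  have [x mx] := kernel_lift ker_m (g := iN ⊙ y) ltac:(by rewrite compA).
  have x0 : x = 0.
    apply: (kernel_cancel ker_i); rewrite comp0r.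
    by move: (congr1 (comp pI) mx); comp_norm; crw pIiI; crw pIiN.
  by move: (congr1 (comp pN) mx); rewrite x0 !comp0r compA pNiN comp1m.
have coker_q : is_cokernel q (c ⊙ iN).
  split=> // W h hj0.
  have [k kp] := cokernel_desc coker_p (g := h ⊙ (c ⊙ iI))
    ltac:(by rewrite -compA ei_jf compA hj0 comp0l).
  exists k; split=> [|k' k'q].
    by apply: uniq; rewrite -compA ?qe ?qj // comp0r hj0.
  by apply: (cokernel_cancel coker_p); rewrite kp -qe compA k'q.
by exists q; split=> //; split=> //; exact: mono_kernel_of_cokernel.
Qed.

End Abelian.

Section ExactSubcategory.
Variables (A : PreAdd) (C : Ob A -> Prop).
Hypotheses (hA : abelian A) (hC : ext_closed_additive C).
Implicit Types X Y Z W M N : Ob A.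

Lemma conflation_pushout M I Y N (i : Mor M I) (p : Mor I Y) (f : Mor M N) :
  conflation C i p -> C N ->
  exists P (j : Mor N P) (q : Mor P Y) (e : Mor I P),
    [/\ conflation C j q, q ⊙ e = p & pushout_square i f e j].
Proof.
case=> ex_ip _ _ CY CN; have [_ [biproduct_ex [_ [cokernel_ex _]]]] := hA.
have [S [iI [iN [pI [pN bip]]]]] := biproduct_ex I N.
have [P [c coker_c]] := cokernel_ex _ _ (iI ⊙ i - iN ⊙ f).
have [q [ex_jq qe]] := pushout_short_exact hA ex_ip bip coker_c.
have CP : C P by case: hC => _ _ ext_closed; exact: ext_closed _ _ _ _ _ ex_jq CN CY.
by exists P, (c ⊙ iN), q, (c ⊙ iI); split=> //; exact: cokernel_pushout_square bip coker_c.
Qed.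

Lemma projective_retract X P1 P2 (a1 : Mor P1 X) (b1 : Mor X P1) (a2 : Mor P2 X)
    (b2 : Mor X P2) :
  C X -> projective C P1 -> projective C P2 -> a1 ⊙ b1 + a2 ⊙ b2 = idm X ->
  projective C X.
Proof.
move=> CX [_ lift1] [_ lift2] retract; split=> // X' E Y i p ip g.
have [h1 ph1] := lift1 _ _ _ _ _ ip (g ⊙ a1).
have [h2 ph2] := lift2 _ _ _ _ _ ip (g ⊙ a2).
exists (h1 ⊙ b1 + h2 ⊙ b2).
by rewrite compDr !compA ph1 ph2 -!compA -compDr retract compm1.
Qed.

Lemma ext_out_in X M (xi : extension C X M) : ext_out xi ⊙ ext_in xi = 0.
Proof. by case: xi => E i p [[[]]]. Qed.

Lemma pushout_ext_idmP X M (xi eta : extension C X M) :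
  pushout_ext (idm M) xi eta <-> ext_equiv xi eta.
Proof. by rewrite /pushout_ext compm1. Qed.

Lemma pushout_ext_comp X M N L (f : Mor M N) (g : Mor N L) (xi : extension C X M)
    (eta : extension C X N) (theta : extension C X L) :
  pushout_ext f xi eta -> pushout_ext g eta theta -> pushout_ext (g ⊙ f) xi theta.
Proof.
move=> [e [ei pe]] [e' [e'i pe']]; exists (e' ⊙ e); split.
  by rewrite -compA ei compA e'i compA.
by rewrite compA pe' pe.
Qed.

Lemma pushout_ext_equivl X M N (f : Mor M N) (xi xi' : extension C X M)
    (eta : extension C X N) :
  ext_equiv xi xi' -> pushout_ext f xi' eta -> pushout_ext f xi eta.
Proof.
move/pushout_ext_idmP => xi_xi' xi'_eta.
by rewrite -[f]compm1; exact: pushout_ext_comp xi_xi' xi'_eta.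
Qed.

Lemma pushout_ext_equivr X M N (f : Mor M N) (xi : extension C X M)
    (eta eta' : extension C X N) :
  pushout_ext f xi eta -> ext_equiv eta eta' -> pushout_ext f xi eta'.
Proof.
move=> xi_eta /pushout_ext_idmP eta_eta'.
by rewrite -[f]comp1m; exact: pushout_ext_comp xi_eta eta_eta'.
Qed.

Lemma ext_equiv_refl X M (xi : extension C X M) : ext_equiv xi xi.
Proof. by exists (idm _); rewrite comp1m compm1. Qed.

Lemma ext_equiv_trans X M (xi1 xi2 xi3 : extension C X M) :
  ext_equiv xi1 xi2 -> ext_equiv xi2 xi3 -> ext_equiv xi1 xi3.
Proof.
move=> xi12 /pushout_ext_idmP xi23.
by apply/pushout_ext_idmP; exact: pushout_ext_equivl xi12 xi23.
Qed.

Lemma ext_equiv_sym X M (xi xi' : extension C X M) :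
  ext_equiv xi xi' -> ext_equiv xi' xi.
Proof.
case: xi xi' => [E i p ip] [E' i' p' ip'] [/= e [ei pe]].
have [[ex_ip _ _ _] [ex_ip' _ _ _]] := (ip, ip').
have [g [ge eg]] := short_five hA ex_ip ex_ip' ei pe.
by exists g; rewrite /= -ei -pe compA ge comp1m -compA eg compm1.
Qed.

Lemma pushout_ext_exists X M N (f : Mor M N) (xi : extension C X M) :
  C N -> exists eta : extension C X N, pushout_ext f xi eta.
Proof.
case: xi => E i p ip CN; have [P [j [q [e [jq qe [ei _ _]]]]]] := conflation_pushout f ip CN.
by exists (Extension jq), e.
Qed.

Lemma ext_zero_sectionP X N (xi : extension C X N) :
  ext_zero xi <-> exists s, ext_out xi ⊙ s = idm X.
Proof.
split=> [[B [i1 [i2 [p1 [p2 [[_ p2i2 _ _ _] [e [_ pe]]]]]]]]|[s ps]].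
  by exists (e ⊙ i2); rewrite compA pe.
have [_ [biproduct_ex _]] := hA; have [B [i1 [i2 [p1 [p2 bip]]]]] := biproduct_ex N X.
have [p1i1 _ p2i1 _ _] := bip.
exists B, i1, i2, p1, p2; split=> //; exists (ext_in xi ⊙ p1 + s ⊙ p2).
by comp_norm; rewrite -!compA p1i1 p2i1; comp_norm; rewrite ps ext_out_in; comp_norm.
Qed.

Lemma pushout_ext0_split X M N (xi : extension C X M) (eta : extension C X N) :
  pushout_ext 0 xi eta -> ext_zero eta.
Proof.
case: xi => E i p [[_ coker_p] _ _ _] [/= e [ei pe]]; rewrite comp0r in ei.
have [s sp] := cokernel_desc coker_p ei.
apply/ext_zero_sectionP; exists s; apply: (cokernel_cancel coker_p).
by rewrite -compA sp pe comp1m.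
Qed.

Lemma ext_equiv_pushout_factor X M (h : Mor M M) (xi xi' : extension C X M) :
  pushout_ext h xi xi' -> ext_equiv xi xi' -> exists s, h - idm M = s ⊙ ext_in xi.
Proof.
case: xi xi' => E i p ip [E' i' p' [[ker_i' _] _ _ _]] [/= e [ei pe]] [/= v [vi pv]].
have [s i's] := kernel_lift ker_i' (g := e - v) ltac:(by rewrite compBr pe pv subrr).
exists s; apply: (kernel_cancel ker_i').
by rewrite compA i's compBl ei vi compBr compm1.
Qed.

Lemma pushout_ext_projective_factor X M N (f : Mor M N) (xi : extension C X M)
    (eta : extension C X N) :
  pushout_ext f xi eta -> projective C (ext_mid eta) ->
  exists g t, f ⊙ g - idm N = t ⊙ ext_in eta.
Proof.
case: xi eta => E i p ip [J j q [[ker_j _] _ _ _]] [/= e [ei qe]] [_ lift_J].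
have [[ker_i _] _ _ _] := ip; have [k pk] := lift_J _ _ _ _ _ ip q.
have [g ig] := kernel_lift ker_i (g := k ⊙ j) ltac:(by rewrite compA pk ker_j.1).
have [t jt] := kernel_lift ker_j (g := e ⊙ k - idm J)
  ltac:(by rewrite compBr compA qe pk compm1 subrr).
exists g, t; apply: (kernel_cancel ker_j).
by rewrite compA jt compBl comp1m -compA -ig compA ei compBr compm1 compA.
Qed.

End ExactSubcategory.

Section Frobenius.
Variables (A : PreAdd) (C : Ob A -> Prop).
Hypotheses (hA : abelian A) (hC : ext_closed_additive C) (hF : frobenius C).
Implicit Types X Y Z W : Ob A.

Lemma projective_injective P : projective C P -> injective C P.
Proof. by case: hF => _ _ proj_inj P_proj; apply/(proj_inj _ P_proj.1). Qed.

Lemma projective_envelope X :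
  C X -> exists I Y (i : Mor X I) (p : Mor I Y), conflation C i p /\ projective C I.
Proof.
case: hF => _ enough_inj proj_inj /enough_inj [I [Y [i [p [ip I_inj]]]]].
by exists I, Y, i, p; split=> //; apply/(proj_inj _ I_inj.1).
Qed.

Lemma factors_projective_inflation X X' E Y (h : Mor X X') (i : Mor X E) (p : Mor E Y) :
  factors_through_projective C h -> conflation C i p -> exists s, h = s ⊙ i.
Proof.
move=> [P [a [b [/projective_injective [_ extend_P] ->]]]] ip.
by have [a' a'i] := extend_P _ _ _ _ _ ip a; exists (b ⊙ a'); rewrite -compA a'i.
Qed.

Lemma pushout_ext_perturb X M N (u v : Mor M N) (xi : extension C X M)
    (eta : extension C X N) :
  factors_through_projective C (u - v) -> pushout_ext u xi eta -> pushout_ext v xi eta.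
Proof.
case: xi => E i p ip /= uv [/= e [ei pe]].
have [s uvs] := factors_projective_inflation uv ip.
exists (e - ext_in eta ⊙ s); split.
  by rewrite compBl ei -compA -uvs -compBr subKr.
by rewrite compBr pe compA ext_out_in comp0l subr0.
Qed.

Definition stably_invertible M N (f : Mor M N) :=
  exists g : Mor N M, factors_through_projective C (g ⊙ f - idm M) /\
                      factors_through_projective C (f ⊙ g - idm N).

Variables (M N : Ob A) (hM : C M) (hN : C N) (f : Mor M N).

Lemma ext_phantom0P : ext_phantom0 C f <-> factors_through_projective C f.
Proof.
split=> [f_phantom | f_proj X _ xi eta f_xi].
  have [I [Y [i [p [ip I_proj]]]]] := projective_envelope hM; have [_ _ _ CY] := ip.
  have [eta f_xi] := pushout_ext_exists hA hC f (Extension ip) hN.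
  have /(ext_zero_sectionP hA) [s qs] := f_phantom Y CY _ _ f_xi.
  have [[ex_eta _ _ _] [/= e [ei _]]] := (ext_confl eta, f_xi).
  have [r rj] := section_retraction ex_eta qs.
  by exists I, i, (r ⊙ e); split=> //; rewrite -compA ei compA rj comp1m.
by apply: (pushout_ext0_split hA); apply: pushout_ext_perturb f_xi; rewrite subr0.
Qed.

Lemma stably_invertible_ext_invertible0 : stably_invertible f -> ext_invertible0 C f.
Proof.
case=> g [gf_proj fg_proj] X _; split=> [xi1 xi2 eta1 eta2 f_xi1 f_xi2 eta12 | eta].
  have [theta g_eta1] := pushout_ext_exists hA hC g eta1 hM.
  have g_eta2 := pushout_ext_equivl (ext_equiv_sym hA eta12) g_eta1.
  have theta_equiv (xi : extension C X M) (eta : extension C X N) :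
      pushout_ext f xi eta -> pushout_ext g eta theta -> ext_equiv xi theta.
    move=> f_xi g_eta; apply/pushout_ext_idmP.
    exact: pushout_ext_perturb gf_proj (pushout_ext_comp f_xi g_eta).
  exact: ext_equiv_trans (theta_equiv _ _ f_xi1 g_eta1)
                         (ext_equiv_sym hA (theta_equiv _ _ f_xi2 g_eta2)).
have [xi g_eta] := pushout_ext_exists hA hC g eta hM.
have [eta' f_xi] := pushout_ext_exists hA hC f xi hN.
exists xi, eta'; split=> //; apply: (ext_equiv_sym hA); apply/pushout_ext_idmP.
exact: pushout_ext_perturb fg_proj (pushout_ext_comp g_eta f_xi).
Qed.

Lemma ext_invertible0_stably_invertible : ext_invertible0 C f -> stably_invertible f.
Proof.
move=> f_inv.
have [J [Y' [j [q [jq J_proj]]]]] := projective_envelope hN; have [_ _ _ CY'] := jq.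
have [xi [eta [f_xi eta_equiv]]] := (f_inv Y' CY').2 (Extension jq).
have [g [t fg]] := pushout_ext_projective_factor (pushout_ext_equivr f_xi eta_equiv) J_proj.
exists g; split; last by exists J, j, t.
have [I [Y [i [p [ip I_proj]]]]] := projective_envelope hM; have [_ _ _ CY] := ip.
have [xi1 gf_xi] := pushout_ext_exists hA hC (g ⊙ f) (Extension ip) hM.
have [eta1 f_xi1] := pushout_ext_exists hA hC f xi1 hN.
have f_xi0 : pushout_ext f (Extension ip) eta1.
  apply: pushout_ext_perturb (pushout_ext_comp gf_xi f_xi1).
  by exists J, (j ⊙ f), t; split=> //; rewrite !compA -fg compBl comp1m.
have xi_equiv := (f_inv Y CY).1 _ _ _ _ f_xi0 f_xi1 (ext_equiv_refl eta1).
by have [s gf] := ext_equiv_pushout_factor gf_xi xi_equiv; exists I, i, s.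
Qed.

Lemma matrix_iso_stably_invertible : matrix_iso_condition C f -> stably_invertible f.
Proof.
case=> P [Q [g1 [l [g2 [P_proj [Q_proj [B1 [iM [iQ [pM [pQ [B2 [jN [jP [qN [qP
  [bip1 [bip2 [psi [psi_phi phi_psi]]]]]]]]]]]]]]]]]]]].
have [pMiM pQiQ pQiM pMiQ _] := bip1; have [qNjN qPjP qPjN qNjP _] := bip2.
exists (pM ⊙ psi ⊙ jN); split.
  exists P, l, (- (pM ⊙ psi ⊙ jP)); split=> //.
  move: (congr1 (fun x => pM ⊙ x ⊙ iM) psi_phi); comp_norm.
  by crw pMiM; crw pQiM => <-; rewrite opprD addNKr.
exists Q, (pQ ⊙ psi ⊙ jN), (- g1); split=> //.
move: (congr1 (fun x => qN ⊙ x ⊙ jN) phi_psi); comp_norm.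
by crw qNjN; crw qNjP => <-; rewrite opprD addNKr.
Qed.

Lemma stably_invertible_matrix_iso : stably_invertible f -> matrix_iso_condition C f.
Proof.
case=> g [gf_proj [J [w [t [J_proj fg]]]]].
have [I [Y [i [p [ip I_proj]]]]] := projective_envelope hM.
have [s gf] := factors_projective_inflation gf_proj ip.
have [P [j [q [e [jq _ po]]]]] := conflation_pushout hA hC f ip hN.
have [_ [biproduct_ex _]] := hA.
have [W [jN [jI [qN [qI bipW]]]]] := biproduct_ex N I.
have [B [iM [iP [pM [pP bipB]]]]] := biproduct_ex M P.
have [qNjN qIjI qIjN qNjI sumW] := bipW.
have rho_phi : (g ⊙ qN - s ⊙ qI) ⊙ (jN ⊙ f + jI ⊙ i) = idm M.
  by comp_norm; crw qNjN; crw qIjI; crw qIjN; crw qNjI; rewrite -gf subKr.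
have [sigma bip] := split_mono_biproduct rho_phi (pushout_square_cokernel po bipW).
have [_ pi_sigma _ _ _] := bip; have [_ _ CP _] := jq; have [ei _ _] := po.
have P_proj : projective C P.
  apply: (projective_retract (a1 := e) (b1 := i ⊙ g ⊙ qN ⊙ sigma - qI ⊙ sigma)
           (a2 := - (j ⊙ t)) (b2 := w ⊙ qN ⊙ sigma)) CP I_proj J_proj _.
  by rewrite -pi_sigma; comp_norm; crw ei; crw (esym fg); rewrite opprB addrC addrA subrK.
exists I, P, (qN ⊙ sigma), i, (qI ⊙ sigma); split=> //; split=> //.
exists B, iM, iP, pM, pP, W, jN, jI, qN, qI; split=> //; split=> //.
have -> : jN ⊙ (f ⊙ pM) + jN ⊙ (qN ⊙ sigma ⊙ pP) + jI ⊙ (i ⊙ pM) + jI ⊙ (qI ⊙ sigma ⊙ pP)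
          = (jN ⊙ f + jI ⊙ i) ⊙ pM + idm W ⊙ sigma ⊙ pP.
  by rewrite -sumW; comp_norm; rewrite -addrA addrACA.
by rewrite comp1m; exact: biproduct_iso bipB bip.
Qed.

End Frobenius.

Theorem proposition3p8 (A : PreAdd) (hA : abelian A) (C : Ob A -> Prop)
    (hC : ext_closed_additive C) (hF : frobenius C)
    (M N : Ob A) (hM : C M) (hN : C N) (f : Mor M N) :
  (ext_phantom0 C f <-> factors_through_projective C f) /\
  (ext_invertible0 C f <-> matrix_iso_condition C f).
Proof.
split; first exact: ext_phantom0P.
split=> [f_inv | f_matrix].
  apply: (stably_invertible_matrix_iso hA hC hF hM hN).
  exact: (ext_invertible0_stably_invertible hA hC hF hM hN).
apply: (stably_invertible_ext_invertible0 hA hC hF hM hN).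
exact: matrix_iso_stably_invertible.
Qed.
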